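(* The following hold. (1) If $\mathbf v_0,\mathbf v_1\in\Lambda_q$ and $\mathbf v_0\neq\pm\mathbf v_1$, then $|\mathbf v_0\wedge\mathbf v_1|\ge1$. (2) Let $\mathbf v\in\mathbb R^2\setminus\{0\}$ be not parallel to any vector of $\Lambda_q$, and let $\mathbf u_0,\mathbf u_1\in\Lambda_q$ with $\mathbf u_0\wedge\mathbf u_1=1$ and $\mathbf v\in\{\alpha\mathbf u_0+\beta\mathbf u_1:\alpha,\beta>0\}$. Then there exist grandchildren $\mathbf w_0,\mathbf w_1$ of $\mathbf u_0,\mathbf u_1$ with $\mathbf w_0\wedge\mathbf w_1=1$, $\{\mathbf w_0,\mathbf w_1\}\neq\{\mathbf u_0,\mathbf u_1\}$, and $\mathbf v\in\{\alpha\mathbf w_0+\beta\mathbf w_1:\alpha,\beta>0\}$. (3) Let $\mathbf u_0,\mathbf u_1\in\Lambda_q$ with $\mathbf u_0\wedge\mathbf u_1=1$, and let $(\mathbf w_n)_{n\ge1}$ be any sequence such that for each $n$, $\mathbf w_n$ is generated at stage $n$ of the $G_q$-Stern–Brocot process started from $(\mathbf u_0,\mathbf u_1)$. Then $\|\mathbf w_n\|\to\infty$. (4) The set of slopes $y/x$ of vectors $(x,y)^T\in\Lambda_q$ with $x\neq0$ is dense in $\mathbb R$.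
   Context: Fix an integer $q\ge3$, let $\lambda_q=2\cos(\pi/q)$, and let $G_q\subset \mathrm{SL}(2,\mathbb R)$ be the Hecke triangle group generated by $S=\begin{pmatrix}0&-1\\1&0\end{pmatrix}$ and $T_q=\begin{pmatrix}1&\lambda_q\\0&1\end{pmatrix}$, acting linearly on $\mathbb R^2$. Set $\Lambda_q=G_q(1,0)^T$. Let $U_q=T_qS$ and $(x_j^q,y_j^q)^T=U_q^j(1,0)^T$. Wedge product: $(x_0,y_0)^T\wedge(x_1,y_1)^T=x_0y_1-x_1y_0$. The $G_q$-Stern–Brocot process started from a pair $\mathbf u_0,\mathbf u_1\in\Lambda_q$ with $\mathbf u_0\wedge\mathbf u_1=1$: set $L_0=(\mathbf u_0,\mathbf u_1)$ and obtain $L_{n+1}$ from the list $L_n$ by replacing each consecutive pair $(\mathbf v,\mathbf w)$ with $x_j^q\mathbf v+y_j^q\mathbf w$, $j=0,\dots,q-1$. A vector is generated at stage $n\ge1$ if it appears in $L_n$ but not in $L_{n-1}$; grandchildren of $\mathbf u_0,\mathbf u_1$ are the vectors generated at some stage $n\ge1$. *)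

From Stdlib Require Import Reals Lra List.
Import ListNotations.
Open Scope R_scope.

Definition vec := (R * R)%type.
(* 2x2 matrix ((a,b),(c,d)) = [[a,b],[c,d]] *)
Definition mat := ((R * R) * (R * R))%type.

Definition lam (q : nat) : R := 2 * cos (PI / INR q).

Definition matS : mat := ((0, -1), (1, 0)).
Definition matSinv : mat := ((0, 1), (-1, 0)).
Definition matT (q : nat) : mat := ((1, lam q), (0, 1)).
Definition matTinv (q : nat) : mat := ((1, - lam q), (0, 1)).
Definition matI : mat := ((1, 0), (0, 1)).

Definition mmul (A B : mat) : mat :=
  let '((a, b), (c, d)) := A in
  let '((e, f), (g, h)) := B in
  ((a * e + b * g, a * f + b * h), (c * e + d * g, c * f + d * h)).

Definition mapp (A : mat) (v : vec) : vec :=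
  let '((a, b), (c, d)) := A in
  let '(x, y) := v in (a * x + b * y, c * x + d * y).

Inductive InG (q : nat) : mat -> Prop :=
| G_id : InG q matI
| G_S : forall M, InG q M -> InG q (mmul matS M)
| G_Sinv : forall M, InG q M -> InG q (mmul matSinv M)
| G_T : forall M, InG q M -> InG q (mmul (matT q) M)
| G_Tinv : forall M, InG q M -> InG q (mmul (matTinv q) M).

Definition InLambda (q : nat) (v : vec) : Prop :=
  exists M, InG q M /\ v = mapp M (1, 0).

Definition wedge (v w : vec) : R := fst v * snd w - fst w * snd v.

Definition vadd (v w : vec) : vec := (fst v + fst w, snd v + snd w).
Definition vscale (a : R) (v : vec) : vec := (a * fst v, a * snd v).
Definition vneg (v : vec) : vec := (- fst v, - snd v).
Definition vnorm (v : vec) : R := sqrt (fst v ^ 2 + snd v ^ 2).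

Definition matU (q : nat) : mat := mmul (matT q) matS.
Definition Uj (q j : nat) : vec := Nat.iter j (mapp (matU q)) (1, 0).
Definition xj (q j : nat) : R := fst (Uj q j).
Definition yj (q j : nat) : R := snd (Uj q j).

(* The vectors x_j v + y_j w for j = 0..q-2.  The vector for j = q-1 equals w
   (since U_q^(q-1)(1,0) = (0,1)) and is the first vector of the next block
   (or the final element), so consecutive blocks are glued at common
   endpoints. *)
Definition block (q : nat) (v w : vec) : list vec :=
  map (fun j => vadd (vscale (xj q j) v) (vscale (yj q j) w)) (seq 0 (q - 1)).

Fixpoint sbstep (q : nat) (L : list vec) : list vec :=
  match L with
  | v :: ((w :: _) as rest) => block q v w ++ sbstep q rest
  | _ => L
  end.

Definition SBlist (q : nat) (u0 u1 : vec) (n : nat) : list vec :=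
  Nat.iter n (sbstep q) [u0; u1].

Definition generated_at (q : nat) (u0 u1 : vec) (n : nat) (w : vec) : Prop :=
  (1 <= n)%nat /\ In w (SBlist q u0 u1 n) /\ ~ In w (SBlist q u0 u1 (n - 1)).

Definition grandchild (q : nat) (u0 u1 w : vec) : Prop :=
  exists n, generated_at q u0 u1 n w.

Definition in_open_cone (u0 u1 v : vec) : Prop :=
  exists a b, 0 < a /\ 0 < b /\ v = vadd (vscale a u0) (vscale b u1).

Definition parallel (v w : vec) : Prop := exists t, v = vscale t w.

From Stdlib Require Import Reals Lra List Lia ZArith Classical.
Import ListNotations.
Open Scope R_scope.

(** By linearity, the lists started from a frame (u0, u1) = (M e1, M e2)
    are their images under M, and by locality of the process the list of stage
    n + 1 is the union of the images of the list of stage n under the q - 1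
    frames (U^j e1, U^(j+1) e1), where U = T_q S acts as a rotation by PI / q.

    (1) The vectors of [SBstd] lie in the first quadrant with coordinates >= 1
        (apart from e1, e2); the set of their quarter-turns is invariant under
        S and T_q^(+-1), hence contains Lambda_q.  So the only vectors of
        Lambda_q with |y| < 1 are +-e1, and transporting by G_q gives (1).
    (2)-(4) Consecutive pairs of stage n are unimodular, lie in the first
        quadrant and have taxicab size >= n + 2, and their cones cover the first
        quadrant.  Every unimodular pair of Lambda_q is a frame (a consequence
        of (1)), so this transports to any start (u0, u1): deep pairs give (2),
        the size bound gives (3), and small cone coefficients give (4). *)

(** * Linear algebra in the plane *)

Definition e1 : vec := (1, 0).
Definition e2 : vec := (0, 1).

Definition comb (a b p : vec) : vec := vadd (vscale (fst p) a) (vscale (snd p) b).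

Definition det (M : mat) : R := let '((a, b), (c, d)) := M in a * d - b * c.

Definition adj (M : mat) : mat := let '((a, b), (c, d)) := M in ((d, - b), (- c, a)).

Ltac vec_eq := unfold comb, mapp, mmul, vadd, vscale, vneg, wedge, e1, e2; simpl; f_equal; ring.

Lemma comb_e1 a b : comb a b e1 = a.
Proof. destruct a, b. vec_eq. Qed.

Lemma comb_e2 a b : comb a b e2 = b.
Proof. destruct a, b. vec_eq. Qed.

Lemma mapp_as_comb M p : mapp M p = comb (mapp M e1) (mapp M e2) p.
Proof. destruct M as [[a b] [c d]], p. vec_eq. Qed.

Lemma comb_comb a b c d p : comb (comb a b c) (comb a b d) p = comb a b (comb c d p).
Proof. destruct a, b, c, d, p. vec_eq. Qed.

Lemma mapp_comb A c d r : mapp A (comb c d r) = comb (mapp A c) (mapp A d) r.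
Proof. destruct A as [[a b] [e f]], c, d, r. vec_eq. Qed.

Lemma vneg_vneg v : vneg (vneg v) = v.
Proof. destruct v. vec_eq. Qed.

Lemma mapp_vneg A v : mapp A (vneg v) = vneg (mapp A v).
Proof. destruct A as [[a b] [c d]], v. vec_eq. Qed.

Lemma mapp_S_S v : mapp matS (mapp matS v) = vneg v.
Proof. destruct v. vec_eq. Qed.

Lemma mapp_mmul A M v : mapp (mmul A M) v = mapp A (mapp M v).
Proof. destruct A as [[a b] [c d]], M as [[e f] [g h]], v. vec_eq. Qed.

Lemma mmul_assoc A B C : mmul (mmul A B) C = mmul A (mmul B C).
Proof. destruct A as [[a b] [c d]], B as [[e f] [g h]], C as [[i j] [k l]]. unfold mmul. f_equal; f_equal; ring. Qed.

Lemma mmul_I_l A : mmul matI A = A.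
Proof. destruct A as [[a b] [c d]]. unfold mmul, matI. f_equal; f_equal; ring. Qed.

Lemma mmul_I_r A : mmul A matI = A.
Proof. destruct A as [[a b] [c d]]. unfold mmul, matI. f_equal; f_equal; ring. Qed.

Lemma det_mmul A B : det (mmul A B) = det A * det B.
Proof. destruct A as [[a b] [c d]], B as [[e f] [g h]]. unfold det, mmul. ring. Qed.

Lemma adj_mmul A B : adj (mmul A B) = mmul (adj B) (adj A).
Proof. destruct A as [[a b] [c d]], B as [[e f] [g h]]. unfold adj, mmul. f_equal; f_equal; ring. Qed.

Lemma wedge_mapp M x y : wedge (mapp M x) (mapp M y) = det M * wedge x y.
Proof. destruct M as [[a b] [c d]], x, y. simpl. unfold wedge. simpl. ring. Qed.

Lemma mapp_adj M v : det M = 1 -> mapp M (mapp (adj M) v) = v.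
Proof.
  destruct M as [[a b] [c d]], v as [x y]. simpl. intros h.
  f_equal; [transitivity ((a * d - b * c) * x) | transitivity ((a * d - b * c) * y)];
  (ring || (rewrite h; ring)).
Qed.

Lemma wedge_comb a b p p' : wedge (comb a b p) (comb a b p') = wedge p p' * wedge a b.
Proof. destruct a, b, p, p'. unfold wedge, comb, vadd, vscale. simpl. ring. Qed.

Lemma wedge_comb_l a b p : wedge (comb a b p) b = fst p * wedge a b.
Proof. destruct a, b, p. unfold wedge, comb, vadd, vscale. simpl. ring. Qed.

Lemma wedge_comb_r a b p : wedge a (comb a b p) = snd p * wedge a b.
Proof. destruct a, b, p. unfold wedge, comb, vadd, vscale. simpl. ring. Qed.

Lemma comb_inj a b x y : wedge a b = 1 -> comb a b x = comb a b y -> x = y.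
Proof.
  intros W E.
  assert (E1 := f_equal (fun z => wedge z b) E). assert (E2 := f_equal (fun z => wedge a z) E).
  simpl in E1, E2. rewrite !wedge_comb_l, W in E1. rewrite !wedge_comb_r, W in E2.
  destruct x, y. simpl in *. f_equal; lra.
Qed.

(** * The Hecke group G_q and the orbit Lambda_q *)

Section HeckeGroup.
Variable q : nat.

Lemma InG_mmul M N : InG q M -> InG q N -> InG q (mmul M N).
Proof.
  intros HM HN. induction HM; [rewrite mmul_I_l|rewrite mmul_assoc; constructor..]; trivial.
Qed.

(* A generator A belongs to G_q as the one-letter word A * I. *)
Lemma InG_generator A : InG q (mmul A matI) -> InG q A.
Proof. now rewrite mmul_I_r. Qed.

Lemma InG_S : InG q matS.
Proof. apply InG_generator. repeat constructor. Qed.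

Lemma InG_Sinv : InG q matSinv.
Proof. apply InG_generator. repeat constructor. Qed.

Lemma InG_T : InG q (matT q).
Proof. apply InG_generator. repeat constructor. Qed.

Lemma InG_Tinv : InG q (matTinv q).
Proof. apply InG_generator. repeat constructor. Qed.

Lemma InG_adj M : InG q M -> InG q (adj M).
Proof.
  intros HM. induction HM; [|rewrite adj_mmul; apply InG_mmul; trivial..].
  - replace (adj matI) with matI by (unfold adj, matI; f_equal; f_equal; ring). constructor.
  - replace (adj matS) with matSinv by (unfold adj, matS, matSinv; f_equal; f_equal; ring). apply InG_Sinv.
  - replace (adj matSinv) with matS by (unfold adj, matS, matSinv; f_equal; f_equal; ring). apply InG_S.
  - replace (adj (matT q)) with (matTinv q) by (unfold adj, matT, matTinv; f_equal; f_equal; ring). apply InG_Tinv.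
  - replace (adj (matTinv q)) with (matT q) by (unfold adj, matT, matTinv; f_equal; f_equal; ring). apply InG_T.
Qed.

Lemma InG_det M : InG q M -> det M = 1.
Proof.
  intros HM. induction HM; [simpl; ring|..]; rewrite det_mmul, IHHM; simpl; ring.
Qed.

(* Conjugation by the reflection diag(1,-1) exchanges S with S^-1 and T with T^-1. *)
Definition reflect (M : mat) : mat := let '((a, b), (c, d)) := M in ((a, - b), (- c, d)).

Lemma reflect_mmul A B : reflect (mmul A B) = mmul (reflect A) (reflect B).
Proof. destruct A as [[a b] [c d]], B as [[e f] [g h]]. unfold reflect, mmul. f_equal; f_equal; ring. Qed.

Lemma InG_reflect M : InG q M -> InG q (reflect M).
Proof.
  intros HM. induction HM; [|rewrite reflect_mmul; apply InG_mmul; trivial..].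
  - replace (reflect matI) with matI by (unfold reflect, matI; f_equal; f_equal; ring). constructor.
  - replace (reflect matS) with matSinv by (unfold reflect, matS, matSinv; f_equal; f_equal; ring).
    apply InG_Sinv.
  - replace (reflect matSinv) with matS by (unfold reflect, matS, matSinv; f_equal; f_equal; ring).
    apply InG_S.
  - replace (reflect (matT q)) with (matTinv q) by (unfold reflect, matT, matTinv; f_equal; f_equal; ring).
    apply InG_Tinv.
  - replace (reflect (matTinv q)) with (matT q) by (unfold reflect, matT, matTinv; f_equal; f_equal; ring).
    apply InG_T.
Qed.

Definition shear (t : R) : mat := ((1, t), (0, 1)).

Lemma InG_shear (k : Z) : InG q (shear (IZR k * lam q)).
Proof.
  assert (Hnat : forall n : nat, InG q (shear (INR n * lam q))).
  { induction n as [|n IH].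
    - replace (shear (INR 0 * lam q)) with matI by (unfold shear, matI; simpl; f_equal; f_equal; ring).
      constructor.
    - replace (shear (INR (S n) * lam q)) with (mmul (matT q) (shear (INR n * lam q))).
      + constructor; trivial.
      + rewrite S_INR. unfold shear, mmul, matT. f_equal; f_equal; ring. }
  destruct (Z_le_gt_dec 0 k) as [h|h].
  - rewrite <- (Z2Nat.id k), <- INR_IZR_INZ by lia. apply Hnat.
  - replace (shear (IZR k * lam q)) with (adj (shear (INR (Z.to_nat (- k)) * lam q))).
    + apply InG_adj, Hnat.
    + rewrite INR_IZR_INZ, Z2Nat.id, opp_IZR by lia. unfold adj, shear. f_equal; f_equal; ring.
Qed.

Definition Frame (a b : vec) : Prop := exists M, InG q M /\ mapp M e1 = a /\ mapp M e2 = b.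

Lemma Lam_mapp M v : InG q M -> InLambda q v -> InLambda q (mapp M v).
Proof. intros HM [N [HN ->]]. exists (mmul M N). split; [apply InG_mmul|rewrite mapp_mmul]; trivial. Qed.

Lemma Lam_preimage M v : InG q M -> InLambda q v -> exists u, InLambda q u /\ mapp M u = v.
Proof.
  intros HM Hv. exists (mapp (adj M) v). split.
  - apply Lam_mapp; [apply InG_adj|]; trivial.
  - apply mapp_adj, InG_det; trivial.
Qed.

Lemma Lam_e1 : InLambda q e1.
Proof. exists matI. split; [constructor|]. vec_eq. Qed.

Lemma Lam_e2 : InLambda q e2.
Proof. replace e2 with (mapp matS e1) by vec_eq. apply Lam_mapp; [apply InG_S|apply Lam_e1]. Qed.

Lemma Lam_frame_comb a b p : Frame a b -> InLambda q p -> InLambda q (comb a b p).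
Proof. intros [M [HM [<- <-]]] Hp. rewrite <- mapp_as_comb. apply Lam_mapp; trivial. Qed.

Lemma Lam_reflect x y : InLambda q (x, y) -> InLambda q (x, - y).
Proof.
  intros [M [HM E]]. exists (reflect M). split; [apply InG_reflect; trivial|].
  destruct M as [[a b] [c d]]. simpl in *. injection E as -> ->. f_equal; ring.
Qed.

End HeckeGroup.

(** * The vectors U_q^j e1 *)

Section Rotation.
Variable q : nat.
Hypothesis hq : (3 <= q)%nat.

Lemma Uj_S j : Uj q (S j) = (lam q * xj q j - yj q j, xj q j).
Proof.
  unfold xj, yj. change (Uj q (S j)) with (mapp (matU q) (Uj q j)).
  destruct (Uj q j) as [x y]. unfold matU, mmul, matT, matS, mapp. simpl. f_equal; ring.
Qed.

Lemma xj_S j : xj q (S j) = lam q * xj q j - yj q j.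
Proof. unfold xj at 1. rewrite Uj_S. reflexivity. Qed.

Lemma yj_S j : yj q (S j) = xj q j.
Proof. unfold yj at 1. rewrite Uj_S. reflexivity. Qed.

Let th := PI / INR q.

Lemma th_facts : 0 < th /\ th <= PI / 3 /\ INR q * th = PI.
Proof.
  assert (H3 : 3 <= INR q) by (replace 3 with (INR 3) by (simpl; ring); apply le_INR; lia).
  pose proof PI_RGT_0. unfold th.
  split; [apply Rdiv_lt_0_compat; lra|]. split.
  - apply Rmult_le_compat_l; [lra|]. apply Rinv_le_contravar; lra.
  - field. lra.
Qed.

Lemma sin_th_pos : 0 < sin th.
Proof. destruct th_facts as [H1 [H2 _]]. pose proof PI_RGT_0. apply sin_gt_0; lra. Qed.

(* Since lam q = 2 cos th, U_q acts as a rotation by th in a suitable basis: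
   x_j = sin((j+1) th) / sin th  and  y_j = sin(j th) / sin th. *)
Lemma Uj_sin j : xj q j * sin th = sin (INR (S j) * th) /\ yj q j * sin th = sin (INR j * th).
Proof.
  induction j as [|j [IH1 IH2]].
  - replace (INR 1 * th) with th by (simpl; ring). replace (INR 0 * th) with 0 by (simpl; ring).
    rewrite sin_0. unfold xj, yj, Uj. simpl. split; ring.
  - rewrite xj_S, yj_S. split; [|exact IH1].
    replace ((lam q * xj q j - yj q j) * sin th)
      with (2 * cos th * (xj q j * sin th) - yj q j * sin th) by (unfold lam, th; ring).
    rewrite IH1, IH2.
    replace (INR (S (S j)) * th) with (INR (S j) * th + th) by (rewrite (S_INR (S j)); ring).
    replace (INR j * th) with (INR (S j) * th - th) by (rewrite (S_INR j); ring).
    rewrite sin_plus, sin_minus. ring.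
Qed.

Lemma sin_ge_sin_th a : th <= a <= PI - th -> sin th <= sin a.
Proof.
  intros Ha. destruct th_facts as [H1 [H2 _]]. pose proof PI_RGT_0.
  destruct (Rle_dec a (PI / 2)).
  - apply sin_incr_1; lra.
  - rewrite <- (sin_PI_x a). apply sin_incr_1; lra.
Qed.

Lemma xj_ge1 j : (j <= q - 2)%nat -> 1 <= xj q j.
Proof.
  intros hj. destruct (Uj_sin j) as [Hx _]. pose proof sin_th_pos.
  destruct th_facts as [H1 [H2 H3]].
  assert (sin th <= sin (INR (S j) * th)).
  { apply sin_ge_sin_th. split.
    - rewrite <- (Rmult_1_l th) at 1. apply Rmult_le_compat_r; [lra|].
      apply (le_INR 1). lia.
    - replace (PI - th) with (INR (q - 1) * th) by (rewrite minus_INR by lia; simpl; lra).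
      apply Rmult_le_compat_r; [lra|]. apply le_INR; lia. }
  apply Rmult_le_reg_r with (sin th); lra.
Qed.

Lemma xj_ge0 j : (j <= q - 1)%nat -> 0 <= xj q j.
Proof.
  intros hj. destruct (Uj_sin j) as [Hx _]. pose proof sin_th_pos.
  destruct th_facts as [H1 [H2 H3]].
  assert (0 <= sin (INR (S j) * th)).
  { apply sin_ge_0.
    - apply Rmult_le_pos; [apply pos_INR|lra].
    - rewrite <- H3. apply Rmult_le_compat_r; [lra|]. apply le_INR; lia. }
  apply Rmult_le_reg_r with (sin th); lra.
Qed.

Lemma yj_ge0 j : (j <= q - 1)%nat -> 0 <= yj q j.
Proof. intros hj. destruct j; [unfold yj; simpl; lra|]. rewrite yj_S. apply xj_ge0; lia. Qed.

Lemma yj_ge1 j : (1 <= j <= q - 1)%nat -> 1 <= yj q j.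
Proof. intros hj. destruct j; [lia|]. rewrite yj_S. apply xj_ge1; lia. Qed.

(* U_q^(q-1) e1 = e2: the rotation by (q-1) th = PI - th. *)
Lemma Uj_last : Uj q (q - 1) = e2.
Proof.
  destruct (Uj_sin (q - 1)) as [Hx Hy]. pose proof sin_th_pos.
  destruct th_facts as [H1 [H2 H3]].
  replace (S (q - 1)) with q in Hx by lia. rewrite H3, sin_PI in Hx.
  rewrite minus_INR in Hy by lia. simpl INR in Hy.
  replace ((INR q - 1) * th) with (PI - th) in Hy by lra. rewrite sin_PI_x in Hy.
  unfold xj, yj in *. destruct (Uj q (q - 1)) as [x y]. simpl in *. unfold e2.
  f_equal; apply Rmult_eq_reg_r with (sin th); lra.
Qed.

Lemma Uj_before_last : Uj q (q - 2) = (1, lam q).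
Proof.
  pose proof Uj_last as H. replace (q - 1)%nat with (S (q - 2)) in H by lia.
  rewrite Uj_S in H. injection H as H1 H2. unfold xj, yj in *.
  destruct (Uj q (q - 2)). simpl in *. f_equal; nra.
Qed.

Lemma Uj_1 : Uj q 1 = (lam q, 1).
Proof. unfold Uj. simpl. unfold matU, mmul, matT, matS, mapp. f_equal; ring. Qed.

Lemma lam_bounds : 1 <= lam q < 2.
Proof.
  split.
  - pose proof (xj_ge1 1 ltac:(lia)). rewrite xj_S in H. unfold xj, yj, Uj in H. simpl in H. lra.
  - pose proof (COS_bound th) as [_ Hc]. pose proof sin_th_pos. pose proof (sin2_cos2 th).
    unfold lam. fold th. destruct (Req_dec (cos th) 1) as [E|E]; [|lra].
    rewrite E in H0. unfold Rsqr in H0. nra.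
Qed.

End Rotation.

Lemma wedge_Uj q j : wedge (Uj q j) (Uj q (S j)) = 1.
Proof.
  induction j as [|j IH].
  - unfold wedge, Uj. simpl. ring.
  - change (Uj q (S (S j))) with (mapp (matU q) (Uj q (S j))).
    change (Uj q (S j)) with (mapp (matU q) (Uj q j)) at 1.
    rewrite wedge_mapp, IH. unfold matU. simpl. ring.
Qed.

(* Each pair (U^j e1, U^(j+1) e1) is a frame, with matrix U^j T. *)
Lemma Frame_Uj q j : Frame q (Uj q j) (Uj q (S j)).
Proof.
  induction j as [|j [M [HM [H1 H2]]]].
  - exists (matT q). split; [apply InG_T|]. unfold Uj. simpl. split; vec_eq.
  - exists (mmul (matU q) M). split.
    + apply InG_mmul; trivial. apply InG_mmul; [apply InG_T|apply InG_S].
    + rewrite !mapp_mmul, H1, H2. split; reflexivity.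
Qed.

Definition cj (q : nat) (v w : vec) (j : nat) : vec := comb v w (Uj q j).

Lemma cj_0 q v w : cj q v w 0 = v.
Proof. apply comb_e1. Qed.

Lemma cj_last q v w : (3 <= q)%nat -> cj q v w (q - 1) = w.
Proof. intros hq. unfold cj. rewrite Uj_last by trivial. apply comb_e2. Qed.

(** * Structure of the Stern-Brocot lists *)

Section Lists.
Variable q : nat.
Hypothesis hq : (3 <= q)%nat.

Lemma block_cj v w : block q v w = map (cj q v w) (seq 0 (q - 1)).
Proof. reflexivity. Qed.

Lemma sbstep_cons2 v w r : sbstep q (v :: w :: r) = block q v w ++ sbstep q (w :: r).
Proof. reflexivity. Qed.

Lemma sbstep_pair v w : sbstep q [v; w] = map (cj q v w) (seq 0 q).
Proof.
  change (sbstep q [v; w]) with (block q v w ++ [w]). rewrite block_cj.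
  assert (E : seq 0 q = seq 0 (q - 1) ++ [(q - 1)%nat]).
  { replace q with (S (q - 1)) at 1 by lia. apply seq_S. }
  rewrite E, map_app. simpl. rewrite cj_last by trivial. reflexivity.
Qed.

Lemma sbstep_head x m : exists t, sbstep q (x :: m) = x :: t.
Proof.
  destruct m as [|y m]; [exists []; reflexivity|].
  rewrite sbstep_cons2, block_cj. replace (q - 1)%nat with (S (q - 2)) by lia.
  simpl. rewrite cj_0. eexists. reflexivity.
Qed.

Lemma sbstep_last l x : exists t, sbstep q (l ++ [x]) = t ++ [x].
Proof.
  induction l as [|y [|z l] IH]; [exists []; reflexivity|exists (block q y x); reflexivity|].
  destruct IH as [t Ht]. exists (block q y z ++ t).
  change ((y :: z :: l) ++ [x]) with (y :: z :: (l ++ [x])).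
  rewrite sbstep_cons2. change (z :: l ++ [x]) with ((z :: l) ++ [x]).
  rewrite Ht, app_assoc. reflexivity.
Qed.

Lemma sbstep_app l x m :
  sbstep q (l ++ x :: m) = removelast (sbstep q (l ++ [x])) ++ sbstep q (x :: m).
Proof.
  induction l as [|y [|z l] IH].
  - reflexivity.
  - simpl. rewrite removelast_last. reflexivity.
  - change ((y :: z :: l) ++ x :: m) with (y :: z :: (l ++ x :: m)).
    change ((y :: z :: l) ++ [x]) with (y :: z :: (l ++ [x])).
    rewrite !sbstep_cons2. change (z :: l ++ x :: m) with ((z :: l) ++ x :: m).
    change (z :: l ++ [x]) with ((z :: l) ++ [x]).
    rewrite IH, removelast_app, app_assoc; [reflexivity|].
    destruct (sbstep_last (z :: l) x) as [t ->]. destruct t; discriminate.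
Qed.

Lemma iter_head n x m : exists t, Nat.iter n (sbstep q) (x :: m) = x :: t.
Proof.
  induction n as [|n [t Ht]]; [exists m; reflexivity|].
  simpl. rewrite Ht. apply sbstep_head.
Qed.

Lemma iter_last n l x : exists t, Nat.iter n (sbstep q) (l ++ [x]) = t ++ [x].
Proof.
  induction n as [|n [t Ht]]; [exists l; reflexivity|].
  simpl. rewrite Ht. apply sbstep_last.
Qed.

Lemma In_iter_app n l x m w :
  In w (Nat.iter n (sbstep q) (l ++ x :: m)) <->
  In w (Nat.iter n (sbstep q) (l ++ [x])) \/ In w (Nat.iter n (sbstep q) (x :: m)).
Proof.
  assert (E : Nat.iter n (sbstep q) (l ++ x :: m) =
              removelast (Nat.iter n (sbstep q) (l ++ [x])) ++ Nat.iter n (sbstep q) (x :: m)).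
  { induction n as [|n IH]; [simpl; rewrite removelast_last; reflexivity|].
    simpl. rewrite IH. destruct (iter_last n l x) as [t1 ->]. destruct (iter_head n x m) as [t2 ->].
    rewrite removelast_last. apply sbstep_app. }
  rewrite E. destruct (iter_last n l x) as [t1 ->]. destruct (iter_head n x m) as [t2 ->].
  rewrite removelast_last, !in_app_iff. simpl. tauto.
Qed.

Lemma In_iter_seq n (f : nat -> vec) w k m : (1 <= m)%nat ->
  In w (Nat.iter n (sbstep q) (map f (seq k (S m)))) <->
  exists j, (k <= j < k + m)%nat /\ In w (Nat.iter n (sbstep q) [f j; f (S j)]).
Proof.
  revert k. induction m as [|[|m] IH]; intros k hm; [lia| |].
  - simpl. split; [intros H; exists k; split; [lia|exact H]|].
    intros [j [Hj Hw]]. replace j with k in Hw by lia. exact Hw.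
  - change (map f (seq k (S (S (S m))))) with ([f k] ++ f (S k) :: map f (seq (S (S k)) (S m))).
    rewrite In_iter_app.
    change (f (S k) :: map f (seq (S (S k)) (S m))) with (map f (seq (S k) (S (S m)))).
    rewrite (IH (S k)) by lia. simpl app. split.
    + intros [H|[j [Hj Hw]]]; [exists k|exists j]; split; trivial; lia.
    + intros [j [Hj Hw]]. destruct (Nat.eq_dec j k) as [->|ne]; [left; exact Hw|].
      right. exists j. split; [lia|exact Hw].
Qed.

Lemma sbstep_comb a b L : map (comb a b) (sbstep q L) = sbstep q (map (comb a b) L).
Proof.
  induction L as [|v [|w L] IH]; [reflexivity..|].
  change (map (comb a b) (v :: w :: L)) with (comb a b v :: comb a b w :: map (comb a b) L).
  rewrite !sbstep_cons2, map_app, IH, !block_cj, map_map. f_equal.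
  apply map_ext. intros j. unfold cj. symmetry. apply comb_comb.
Qed.

Definition SBstd (n : nat) : list vec := SBlist q e1 e2 n.

Lemma SBlist_comb a b n : SBlist q a b n = map (comb a b) (SBstd n).
Proof.
  unfold SBstd, SBlist. induction n as [|n IH].
  - simpl. rewrite comb_e1, comb_e2. reflexivity.
  - simpl. rewrite IH. symmetry. apply sbstep_comb.
Qed.

Lemma SBstd_S_iff n w :
  In w (SBstd (S n)) <->
  exists j r, (j <= q - 2)%nat /\ In r (SBstd n) /\ w = comb (Uj q j) (Uj q (S j)) r.
Proof.
  assert (Hstd : forall j, cj q e1 e2 j = Uj q j).
  { intros j. unfold cj. destruct (Uj q j). vec_eq. }
  unfold SBstd at 1, SBlist. rewrite Nat.iter_succ_r.
  change (Nat.iter 1 (sbstep q) [e1; e2]) with (sbstep q [e1; e2]).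
  rewrite sbstep_pair, (map_ext _ _ Hstd).
  replace (seq 0 q) with (seq 0 (S (q - 1))) by (f_equal; lia).
  rewrite In_iter_seq by lia.
  setoid_rewrite (SBlist_comb (Uj q _) (Uj q (S _)) n). setoid_rewrite in_map_iff.
  split.
  - intros [j [Hj [r [<- Hr]]]]. exists j, r. split; [lia|auto].
  - intros [j [r [Hj [Hr ->]]]]. exists j. split; [lia|]. exists r. auto.
Qed.

End Lists.

(** * Part (1): vectors of Lambda_q have second coordinate 0 or of modulus >= 1 *)

Section Discreteness.
Variable q : nat.
Hypothesis hq : (3 <= q)%nat.

Lemma SBstd_0 : SBstd q 0 = [e1; e2].
Proof. reflexivity. Qed.

Lemma SBstd_S_intro n j r : (j <= q - 2)%nat -> In r (SBstd q n) ->
  In (comb (Uj q j) (Uj q (S j)) r) (SBstd q (S n)).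
Proof. intros hj hr. apply SBstd_S_iff; trivial. exists j, r. auto. Qed.

Lemma Uj_in_SBstd1 j : (j <= q - 2)%nat -> In (Uj q j) (SBstd q 1).
Proof.
  intros hj. rewrite <- (comb_e1 (Uj q j) (Uj q (S j))).
  apply SBstd_S_intro; trivial. rewrite SBstd_0. simpl; auto.
Qed.

Definition std_shape (p : vec) : Prop :=
  0 <= fst p /\ 0 <= snd p /\ (p = e1 \/ 1 <= snd p) /\ (p = e2 \/ 1 <= fst p).

Lemma SBstd_shape n p : In p (SBstd q n) -> std_shape p.
Proof.
  revert p. induction n as [|n IH]; intros p Hp.
  - rewrite SBstd_0 in Hp. destruct Hp as [<-|[<-|[]]]; unfold std_shape, e1, e2; simpl;
      repeat split; (lra || auto).
  - apply SBstd_S_iff in Hp as [j [r [Hj [Hr ->]]]]; trivial.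
    destruct (IH r Hr) as [r1 [r2 [r3 r4]]].
    pose proof (xj_ge0 q hq j ltac:(lia)). pose proof (xj_ge0 q hq (S j) ltac:(lia)).
    pose proof (yj_ge0 q hq j ltac:(lia)). pose proof (yj_ge1 q hq (S j) ltac:(lia)).
    pose proof (xj_ge1 q hq j ltac:(lia)).
    assert (Ex : fst (comb (Uj q j) (Uj q (S j)) r) = fst r * xj q j + snd r * xj q (S j)) by reflexivity.
    assert (Ey : snd (comb (Uj q j) (Uj q (S j)) r) = fst r * yj q j + snd r * yj q (S j)) by reflexivity.
    unfold std_shape. rewrite Ex, Ey. split; [nra|]. split; [nra|]. split.
    + destruct r3 as [->|r3]; [|right; nra].
      destruct j as [|j]; [left; apply comb_e1|].
      right. pose proof (yj_ge1 q hq (S j) ltac:(lia)). unfold e1; simpl; lra.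
    + destruct r4 as [->|r4]; [|right; nra].
      destruct (Nat.eq_dec (S j) (q - 1)) as [E|E].
      * left. rewrite comb_e2, E. apply Uj_last; trivial.
      * right. pose proof (xj_ge1 q hq (S j) ltac:(lia)). unfold e2; simpl; lra.
Qed.

Definition Orbit (w : vec) : Prop := exists n p, In p (SBstd q n) /\
  (w = p \/ w = mapp matS p \/ w = vneg p \/ w = vneg (mapp matS p)).

Lemma Orbit_std n p : In p (SBstd q n) -> Orbit p.
Proof. intros. exists n, p. auto. Qed.

Lemma Orbit_S_std n p : In p (SBstd q n) -> Orbit (mapp matS p).
Proof. intros. exists n, p. auto. Qed.

Lemma Orbit_neg w : Orbit w -> Orbit (vneg w).
Proof.
  intros [n [p [Hp H]]]. exists n, p. split; trivial.
  destruct H as [ -> |[ -> |[ -> | -> ]]]; rewrite ?vneg_vneg; auto.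
Qed.

Lemma Orbit_S w : Orbit w -> Orbit (mapp matS w).
Proof.
  intros [n [p [Hp [ -> |[ -> |[ -> | -> ]]]]]].
  - eapply Orbit_S_std; eauto.
  - rewrite mapp_S_S. apply Orbit_neg. eapply Orbit_std; eauto.
  - rewrite mapp_vneg. apply Orbit_neg. eapply Orbit_S_std; eauto.
  - rewrite mapp_vneg, mapp_S_S, vneg_vneg. eapply Orbit_std; eauto.
Qed.

Lemma Orbit_Sinv w : Orbit w -> Orbit (mapp matSinv w).
Proof.
  intros H. replace (mapp matSinv w) with (vneg (mapp matS w)) by (destruct w; vec_eq).
  apply Orbit_neg, Orbit_S; trivial.
Qed.

(* U_q = T_q S maps the list vectors into the orbit: it shifts the frame index j,
   the last frame being sent to (e2, -e1). *)
Lemma Orbit_U_std n p : In p (SBstd q n) -> Orbit (mapp (matU q) p).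
Proof.
  intros Hp. destruct n as [|n].
  - rewrite SBstd_0 in Hp. destruct Hp as [<-|[<-|[]]].
    + apply (Orbit_std 1). apply (Uj_in_SBstd1 1). lia.
    + replace (mapp (matU q) e2) with (vneg e1) by vec_eq.
      apply Orbit_neg, (Orbit_std 0). rewrite SBstd_0; simpl; auto.
  - apply SBstd_S_iff in Hp as [j [r [Hj [Hr ->]]]]; trivial.
    rewrite mapp_comb. change (mapp (matU q) (Uj q ?k)) with (Uj q (S k)).
    destruct (Nat.eq_dec (S j) (q - 1)) as [E|E].
    + rewrite E, Uj_last by trivial. change (Uj q (S (q - 1))) with (mapp (matU q) (Uj q (q - 1))).
      rewrite Uj_last by trivial.
      replace (comb e2 (mapp (matU q) e2) r) with (mapp matS r) by (destruct r; vec_eq).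
      eapply Orbit_S_std; eauto.
    + apply (Orbit_std (S n)). apply SBstd_S_intro; trivial. lia.
Qed.

(* T_q p is the image of p under the first frame (e1, T_q e2), and T_q S = U_q. *)
Lemma Orbit_T w : Orbit w -> Orbit (mapp (matT q) w).
Proof.
  intros [n [p [Hp H]]].
  assert (HT : Orbit (mapp (matT q) p)).
  { apply (Orbit_std (S n)). replace (mapp (matT q) p) with (comb (Uj q 0) (Uj q 1) p).
    - apply SBstd_S_intro; trivial. lia.
    - rewrite Uj_1. destruct p. unfold Uj. simpl. vec_eq. }
  assert (HTS : forall v, mapp (matT q) (mapp matS v) = mapp (matU q) v)
    by (intros v; unfold matU; rewrite mapp_mmul; reflexivity).
  destruct H as [ -> |[ -> |[ -> | -> ]]]; rewrite ?mapp_vneg, ?HTS; try apply Orbit_neg; trivial;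
    eapply Orbit_U_std; eauto.
Qed.

(* T_q^-1 undoes the first frame and maps the frame (U^(j+1) e1, U^(j+2) e1) to
   S (U^j e1, U^(j+1) e1); on S p it acts as S composed with the last frame. *)
Lemma Orbit_Tinv w : Orbit w -> Orbit (mapp (matTinv q) w).
Proof.
  intros [n [p [Hp H]]].
  assert (H1 : Orbit (mapp (matTinv q) p)).
  { destruct n as [|n].
    - rewrite SBstd_0 in Hp. destruct Hp as [<-|[<-|[]]].
      + replace (mapp (matTinv q) e1) with e1 by vec_eq.
        apply (Orbit_std 0). rewrite SBstd_0; simpl; auto.
      + replace (mapp (matTinv q) e2) with (mapp matS (Uj q (q - 2)))
          by (rewrite Uj_before_last by trivial; vec_eq).
        apply (Orbit_S_std 1). apply Uj_in_SBstd1; lia.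
    - apply SBstd_S_iff in Hp as [j [r [Hj [Hr ->]]]]; trivial.
      rewrite mapp_comb. destruct j as [|j].
      + replace (comb (mapp (matTinv q) (Uj q 0)) (mapp (matTinv q) (Uj q 1)) r) with r.
        * eapply Orbit_std; eauto.
        * rewrite Uj_1. destruct r. unfold Uj. simpl. vec_eq.
      + assert (HUS : forall v, mapp (matTinv q) (mapp (matU q) v) = mapp matS v)
          by (intros [x y]; vec_eq).
        change (Uj q (S ?k)) with (mapp (matU q) (Uj q k)). rewrite !HUS, <- mapp_comb.
        apply (Orbit_S_std (S n)). apply SBstd_S_intro; trivial. lia. }
  assert (H2 : Orbit (mapp (matTinv q) (mapp matS p))).
  { replace (mapp (matTinv q) (mapp matS p)) with (mapp matS (comb (Uj q (q - 2)) (Uj q (S (q - 2))) p)).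
    - apply (Orbit_S_std (S n)). apply SBstd_S_intro; trivial.
    - replace (S (q - 2)) with (q - 1)%nat by lia. rewrite Uj_last, Uj_before_last by trivial.
      destruct p. vec_eq. }
  destruct H as [ -> |[ -> |[ -> | -> ]]]; rewrite ?mapp_vneg; try apply Orbit_neg; trivial.
Qed.

Lemma Lambda_in_Orbit v : InLambda q v -> Orbit v.
Proof.
  intros [M [HM ->]]. induction HM; rewrite ?mapp_mmul.
  - apply (Orbit_std 0). rewrite SBstd_0. left. vec_eq.
  - apply Orbit_S; trivial.
  - apply Orbit_Sinv; trivial.
  - apply Orbit_T; trivial.
  - apply Orbit_Tinv; trivial.
Qed.

Lemma Lambda_snd v : InLambda q v -> v = e1 \/ v = vneg e1 \/ 1 <= Rabs (snd v).
Proof.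
  intros Hv. destruct (Lambda_in_Orbit v Hv) as [n [[x y] [Hp H]]].
  destruct (SBstd_shape n _ Hp) as [p1 [p2 [p3 p4]]]. simpl in *.
  destruct H as [ -> |[ -> |[ -> | -> ]]]; unfold mapp, matS, vneg, e1, e2 in *; simpl.
  - destruct p3 as [E|E]; [auto|]. right; right. rewrite Rabs_right; lra.
  - destruct p4 as [E|E]; [|right; right; rewrite Rabs_right; lra].
    right; left. injection E as -> ->. f_equal; ring.
  - destruct p3 as [E|E]; [|right; right; rewrite Rabs_left1; lra].
    right; left. injection E as -> ->. reflexivity.
  - destruct p4 as [E|E]; [|right; right; rewrite Rabs_left1; lra].
    left. injection E as -> ->. f_equal; ring.
Qed.

(* Part (1): distinct non-opposite vectors of Lambda_q span area at least 1.
   Writing v0 = M e1 with M in G_q, the wedge equals the second coordinate of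
   M^-1 v1, which lies in Lambda_q and differs from +-e1. *)
Theorem Lambda_wedge_ge1 v0 v1 : InLambda q v0 -> InLambda q v1 ->
  v0 <> v1 -> v0 <> vneg v1 -> 1 <= Rabs (wedge v0 v1).
Proof.
  intros [M [HM ->]] Hv1 N1 N2.
  destruct (Lam_preimage q M v1 HM Hv1) as [u [Lu <-]].
  rewrite wedge_mapp, (InG_det q M HM), Rmult_1_l.
  destruct (Lambda_snd u Lu) as [ -> |[ -> |E]].
  - exfalso. apply N1. reflexivity.
  - exfalso. apply N2. rewrite mapp_vneg, vneg_vneg. reflexivity.
  - destruct u as [x y]. unfold wedge. simpl in *. replace (1 * y - x * 0) with y by ring. trivial.
Qed.

End Discreteness.

(** * Unimodular pairs of Lambda_q *)

Section Frames.
Variable q : nat.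
Hypothesis hq : (3 <= q)%nat.

(* A vector of Lambda_q at height 1 is a translate of e2 by a power of T_q:
   otherwise it would be at horizontal distance < 1 from e2 or T_q e2. *)
Lemma Lambda_height1 x : InLambda q (x, 1) -> exists k, x = IZR k * lam q.
Proof.
  intros H. destruct (lam_bounds q hq) as [L1 L2].
  set (k := (up (x / lam q) - 1)%Z).
  destruct (archimed (x / lam q)) as [A1 A2].
  assert (K : IZR k * lam q <= x < (IZR k + 1) * lam q).
  { unfold k. rewrite minus_IZR. simpl.
    assert (x = x / lam q * lam q) by (field; lra). split; nra. }
  set (t := x - IZR k * lam q).
  assert (Ht : InLambda q (t, 1)).
  { replace (t, 1) with (mapp (shear (IZR (- k) * lam q)) (x, 1))
      by (rewrite opp_IZR; unfold t, shear; simpl; f_equal; ring).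
    apply Lam_mapp; [apply InG_shear|trivial]. }
  exists k. destruct (Req_dec t 0) as [E|E]; [unfold t in E; lra|exfalso].
  assert (Hl : InLambda q (lam q, 1)).
  { replace (lam q, 1) with (mapp (matT q) e2) by vec_eq.
    apply Lam_mapp; [apply InG_T|apply Lam_e2]. }
  assert (W1 : 1 <= Rabs (wedge (t, 1) e2)).
  { apply (Lambda_wedge_ge1 q hq); trivial; [apply Lam_e2|..];
      unfold e2, vneg; intros F; injection F; simpl; lra. }
  assert (W2 : 1 <= Rabs (wedge (t, 1) (lam q, 1))).
  { apply (Lambda_wedge_ge1 q hq); trivial;
      unfold vneg; intros F; injection F; simpl; unfold t in *; lra. }
  unfold wedge, e2 in W1, W2; simpl in W1, W2.
  replace (t * 1 - 0 * 1) with t in W1 by ring. rewrite Rabs_right in W1 by (unfold t; lra).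
  replace (t * 1 - lam q * 1) with (- (lam q - t)) in W2 by ring.
  rewrite Rabs_Ropp, Rabs_right in W2 by (unfold t; lra). unfold t in *. lra.
Qed.

(* Every unimodular pair of vectors of Lambda_q is a frame: writing u0 = M e1,
   the vector M^-1 u1 has height 1, hence equals T_q^k e2 for some k. *)
Lemma unimodular_frame u0 u1 :
  InLambda q u0 -> InLambda q u1 -> wedge u0 u1 = 1 -> Frame q u0 u1.
Proof.
  intros [M [HM ->]] Hu1 W.
  destruct (Lam_preimage q M u1 HM Hu1) as [[x y] [Lu <-]].
  rewrite wedge_mapp, (InG_det q M HM) in W. unfold wedge in W. simpl in W.
  replace y with 1 in Lu |- * by lra.
  destruct (Lambda_height1 x Lu) as [k ->].
  exists (mmul M (shear (IZR k * lam q))). split; [apply InG_mmul; [|apply InG_shear]; trivial|].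
  rewrite !mapp_mmul. split; f_equal; unfold shear, e1, e2, mapp; f_equal; ring.
Qed.

Lemma SBstd_in_Lambda n p : In p (SBstd q n) -> InLambda q p.
Proof.
  revert p. induction n as [|n IH]; intros p Hp.
  - rewrite SBstd_0 in Hp. destruct Hp as [<-|[<-|[]]]; [apply Lam_e1|apply Lam_e2].
  - apply SBstd_S_iff in Hp as [j [r [Hj [Hr ->]]]]; trivial.
    apply Lam_frame_comb; [apply Frame_Uj|apply IH; trivial].
Qed.

End Frames.

(** * Consecutive pairs in the lists *)

Definition Adj (L : list vec) (a b : vec) : Prop := exists l1 l2, L = l1 ++ a :: b :: l2.

Fixpoint chain (P : vec -> vec -> Prop) (L : list vec) : Prop :=
  match L with
  | a :: ((b :: _) as r) => P a b /\ chain P r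
  | _ => True
  end.

Lemma chain_app P l y m : chain P (l ++ [y]) -> chain P (y :: m) -> chain P (l ++ y :: m).
Proof.
  induction l as [|x [|x' l] IH]; intros H1 H2; [exact H2|simpl in *; tauto|].
  destruct H1 as [H1 H3]. split; [exact H1|]. apply IH; trivial.
Qed.

Lemma chain_seq P (f : nat -> vec) k m :
  (forall j, (k <= j < k + m)%nat -> P (f j) (f (S j))) -> chain P (map f (seq k (S m))).
Proof.
  revert k. induction m as [|m IH]; intros k H; simpl; trivial.
  split; [apply H; lia|]. apply (IH (S k)). intros; apply H; lia.
Qed.

Lemma chain_adj P L a b : chain P L -> Adj L a b -> P a b.
Proof.
  intros HC [l1 [l2 ->]]. induction l1 as [|x [|y l1] IH]; simpl in *; [tauto..|].
  apply IH. tauto.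
Qed.

Lemma Adj_in L a b : Adj L a b -> In a L /\ In b L.
Proof. intros [l1 [l2 ->]]. split; apply in_or_app; simpl; auto. Qed.

Section Pairs.
Variable q : nat.
Hypothesis hq : (3 <= q)%nat.

Lemma sbstep_cons_split v w r : exists t,
  sbstep q (v :: w :: r) = map (cj q v w) (seq 0 (S (q - 1))) ++ t /\ sbstep q (w :: r) = w :: t.
Proof.
  destruct (sbstep_head q hq w r) as [t Ht]. exists t. split; trivial.
  rewrite sbstep_cons2, Ht, block_cj, seq_S, map_app, <- app_assoc. simpl.
  rewrite cj_last by trivial. reflexivity.
Qed.

Lemma chain_sbstep (P Q : vec -> vec -> Prop) L :
  (forall a b, P a b -> forall j, (j <= q - 2)%nat -> Q (cj q a b j) (cj q a b (S j))) ->
  chain P L -> chain Q (sbstep q L).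
Proof.
  intros HPQ. induction L as [|v [|w r] IH]; [simpl; trivial..|].
  intros [H1 H2]. destruct (sbstep_cons_split v w r) as [t [E1 E2]].
  rewrite E1, seq_S, map_app, <- app_assoc. simpl app. apply chain_app.
  - replace (map (cj q v w) (seq 0 (q - 1)) ++ [cj q v w (q - 1)])
      with (map (cj q v w) (seq 0 (S (q - 1)))) by (rewrite seq_S, map_app; reflexivity).
    apply chain_seq. intros j Hj. apply HPQ; trivial. lia.
  - rewrite cj_last, <- E2 by trivial. apply IH; trivial.
Qed.

Lemma Adj_sbstep L a b j : (j <= q - 2)%nat -> Adj L a b ->
  Adj (sbstep q L) (cj q a b j) (cj q a b (S j)).
Proof.
  intros hj [l1 [l2 ->]]. rewrite sbstep_app.
  destruct (sbstep_cons_split a b l2) as [t [E1 _]]. rewrite E1.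
  replace (S (q - 1)) with (j + S (S (q - 2 - j)))%nat by lia.
  rewrite seq_app, map_app. simpl.
  exists (removelast (sbstep q (l1 ++ [a])) ++ map (cj q a b) (seq 0 j)).
  eexists. rewrite <- !app_assoc. reflexivity.
Qed.

Lemma sbstep_new L p : In p (sbstep q L) ->
  In p L \/ exists a b j, Adj L a b /\ (1 <= j <= q - 2)%nat /\ p = cj q a b j.
Proof.
  induction L as [|v [|w r] IH]; [simpl; auto..|].
  rewrite sbstep_cons2. intros H. apply in_app_or in H as [H|H].
  - rewrite block_cj in H. apply in_map_iff in H as [[|j] [<- Hj]]; apply in_seq in Hj.
    + left. rewrite cj_0. simpl; auto.
    + right. exists v, w, (S j). split; [exists [], r; reflexivity|]. split; [lia|reflexivity].
  - destruct (IH H) as [H1|[a [b [j [[l1 [l2 E]] H2]]]]]; [left; simpl; auto|].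
    right. exists a, b, j. split; trivial. exists (v :: l1), l2. rewrite E. reflexivity.
Qed.

Lemma fst_cj a b j : fst (cj q a b j) = xj q j * fst a + yj q j * fst b.
Proof. reflexivity. Qed.

Lemma snd_cj a b j : snd (cj q a b j) = xj q j * snd a + yj q j * snd b.
Proof. reflexivity. Qed.

Definition size1 (p : vec) : R := fst p + snd p.

Definition pair_inv (n : nat) (a b : vec) : Prop :=
  wedge a b = 1 /\ 1 <= fst a /\ 0 <= snd a /\ 0 <= fst b /\ 1 <= snd b /\
  INR n + 2 <= size1 a + size1 b.

(* The invariant passes to the refined pairs: the size grows by at least 1
   since x_j >= 1, y_(j+1) >= 1 and x_(j+1) + y_j >= 1. *)
Lemma pair_inv_step n a b j : (j <= q - 2)%nat -> pair_inv n a b ->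
  pair_inv (S n) (cj q a b j) (cj q a b (S j)).
Proof.
  intros hj [W [a1 [a2 [b1 [b2 Hs]]]]].
  pose proof (xj_ge1 q hq j ltac:(lia)). pose proof (xj_ge0 q hq (S j) ltac:(lia)).
  pose proof (yj_ge0 q hq j ltac:(lia)). pose proof (yj_ge1 q hq (S j) ltac:(lia)).
  assert (1 <= xj q (S j) + yj q j).
  { destruct j as [|j]; [|pose proof (yj_ge1 q hq (S j) ltac:(lia)); lra].
    pose proof (xj_ge1 q hq 1 ltac:(lia)). unfold yj, Uj. simpl. lra. }
  unfold pair_inv. split; [unfold cj; rewrite wedge_comb, wedge_Uj, W; ring|].
  unfold size1 in *. rewrite !fst_cj, !snd_cj, S_INR. repeat split; nra.
Qed.

Lemma chain_pair_inv n : chain (pair_inv n) (SBstd q n).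
Proof.
  induction n as [|n IH].
  - simpl. split; trivial. unfold pair_inv, size1, e1, e2, wedge. simpl. repeat split; lra.
  - apply (chain_sbstep (pair_inv n)); trivial. intros. apply pair_inv_step; trivial.
Qed.

Lemma Adj_pair_inv n a b : Adj (SBstd q n) a b -> pair_inv n a b.
Proof. apply chain_adj, chain_pair_inv. Qed.

Lemma new_size m p : In p (SBstd q (S m)) -> ~ In p (SBstd q m) -> INR (S m) + 1 <= size1 p.
Proof.
  intros H1 H2. destruct (sbstep_new _ p H1) as [H|[a [b [j [Hab [Hj ->]]]]]]; [contradiction|].
  destruct (Adj_pair_inv m a b Hab) as [_ [a1 [a2 [b1 [b2 Hs]]]]].
  pose proof (xj_ge1 q hq j ltac:(lia)). pose proof (yj_ge1 q hq j ltac:(lia)).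
  unfold size1 in *. rewrite fst_cj, snd_cj, S_INR. nra.
Qed.

Definition closed_cone (a b p : vec) : Prop := exists c, 0 <= fst c /\ 0 <= snd c /\ p = comb a b c.

Lemma cramer a b p : wedge a b = 1 -> p = comb a b (wedge p b, wedge a p).
Proof.
  destruct a as [a1 a2], b as [b1 b2], p as [x y]. unfold wedge. simpl. intros W.
  unfold comb, vadd, vscale. simpl.
  f_equal; [transitivity (x * (a1 * b2 - b1 * a2)) | transitivity (y * (a1 * b2 - b1 * a2))];
    (ring || (rewrite W; ring)).
Qed.

Lemma sign_change (f : nat -> R) N : 0 <= f 0%nat -> f (S N) <= 0 ->
  exists j, (j <= N)%nat /\ 0 <= f j /\ f (S j) <= 0.
Proof.
  induction N as [|N IH]; intros H0 H1; [exists 0%nat; auto|].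
  destruct (Rle_dec 0 (f (S N))) as [h|h]; [exists (S N); auto|].
  destruct (IH H0 ltac:(lra)) as [j [Hj H]]. exists j. split; [lia|trivial].
Qed.

Lemma quadrant_subcone p : 0 <= fst p -> 0 <= snd p ->
  exists j, (j <= q - 2)%nat /\ closed_cone (Uj q j) (Uj q (S j)) p.
Proof.
  intros h1 h2.
  destruct (sign_change (fun j => wedge (Uj q j) p) (q - 2)) as [j [Hj [F1 F2]]].
  - destruct p. unfold Uj, wedge. simpl in *. lra.
  - replace (S (q - 2)) with (q - 1)%nat by lia. rewrite Uj_last by trivial.
    destruct p. unfold e2, wedge. simpl in *. lra.
  - cbv beta in F1, F2. exists j. split; trivial. exists (wedge p (Uj q (S j)), wedge (Uj q j) p).
    cbn [fst snd]. split; [|split; [trivial|apply cramer, wedge_Uj]].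
    replace (wedge p (Uj q (S j))) with (- wedge (Uj q (S j)) p) by (unfold wedge; ring). lra.
Qed.

Lemma coverage p : 0 <= fst p -> 0 <= snd p ->
  forall n, exists a b, Adj (SBstd q n) a b /\ closed_cone a b p.
Proof.
  intros h1 h2 n. induction n as [|n [a [b [Hab [c [c1 [c2 ->]]]]]]].
  - exists e1, e2. split; [exists [], []; reflexivity|].
    exists p. split; [|split]; trivial. destruct p. vec_eq.
  - destruct (quadrant_subcone c c1 c2) as [j [Hj [c' [c1' [c2' Ec]]]]].
    exists (cj q a b j), (cj q a b (S j)). split; [apply Adj_sbstep; trivial|].
    exists c'. split; [|split]; trivial. rewrite Ec. unfold cj. symmetry. apply comb_comb.
Qed.

End Pairs.

(** * Parts (2), (3) and (4) *)

Lemma nat_above x : exists n : nat, x < INR n.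
Proof. destruct (INR_archimed 1 x) as [n Hn]; [lra|]. exists n. lra. Qed.

Section Applications.
Variable q : nat.
Hypothesis hq : (3 <= q)%nat.

Lemma grandchild_intro u0 u1 w n :
  In w (SBlist q u0 u1 n) -> ~ In w (SBlist q u0 u1 0) -> grandchild q u0 u1 w.
Proof.
  induction n as [|n IH]; intros H1 H2; [contradiction|].
  destruct (classic (In w (SBlist q u0 u1 n))) as [h|h]; auto.
  exists (S n). split; [lia|]. split; trivial. replace (S n - 1)%nat with n by lia. trivial.
Qed.

Lemma comb_not_initial u0 u1 p : wedge u0 u1 = 1 -> p <> e1 -> p <> e2 ->
  ~ In (comb u0 u1 p) (SBlist q u0 u1 0).
Proof.
  intros W h1 h2 [h|[h|[]]]; [apply h1|apply h2]; symmetry; apply (comb_inj u0 u1 _ _ W);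
    rewrite <- h; [apply comb_e1|apply comb_e2].
Qed.

Lemma open_cone_of_nonparallel w0 w1 v :
  closed_cone w0 w1 v -> ~ parallel v w0 -> ~ parallel v w1 -> in_open_cone w0 w1 v.
Proof.
  intros [[al be] [A [B ->]]] N0 N1. simpl in A, B. exists al, be.
  split; [|split; [|reflexivity]].
  - destruct A as [A|A]; trivial. exfalso. apply N1. exists be. subst. destruct w0, w1. vec_eq.
  - destruct B as [B|B]; trivial. exfalso. apply N0. exists al. subst. destruct w0, w1. vec_eq.
Qed.

(* Once n exceeds both ratios a/b and b/a, a consecutive pair at stage n whose
   cone contains (a, b) avoids e1 and e2: e.g. if c = e1 then d = (dx, 1) with
   dx >= n by the size bound, which forces a >= n b. *)
Lemma deep_pair_not_initial n a b c d :
  0 < a -> 0 < b -> a < INR n * b -> b < INR n * a ->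
  pair_inv n c d -> closed_cone c d (a, b) ->
  c <> e1 /\ c <> e2 /\ d <> e1 /\ d <> e2.
Proof.
  intros ha hb Ha Hb [W [c1 [c2 [d1 [d2 Hs]]]]] [[g1 g2] [G1 [G2 E]]].
  destruct c as [cx cy], d as [dx dy]. unfold size1, wedge in *. cbn [fst snd] in *.
  unfold comb, vadd, vscale in E. simpl in E. injection E as Ea Eb.
  repeat split; intros h; injection h as -> ->; nra.
Qed.

(* Part (2): transport to (e1, e2) by the frame (u0, u1), take a consecutive pair
   of a deep stage whose cone contains the coordinates (a, b) of v, and map it back. *)
Theorem cone_refinement v u0 u1 :
  (forall u, InLambda q u -> ~ parallel v u) ->
  InLambda q u0 -> InLambda q u1 -> wedge u0 u1 = 1 ->
  in_open_cone u0 u1 v ->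
  exists w0 w1 : vec,
    grandchild q u0 u1 w0 /\ grandchild q u0 u1 w1 /\ wedge w0 w1 = 1 /\
    ~ ((w0 = u0 /\ w1 = u1) \/ (w0 = u1 /\ w1 = u0)) /\ in_open_cone w0 w1 v.
Proof.
  intros NP L0 L1 W [a [b [ha [hb Ev]]]].
  destruct (nat_above (a / b + b / a)) as [n Hn].
  assert (Hab : 0 < a / b /\ 0 < b / a) by (split; apply Rdiv_lt_0_compat; lra).
  assert (Ha : a < INR n * b) by (replace a with (a / b * b) at 1 by (field; lra); nra).
  assert (Hb : b < INR n * a) by (replace b with (b / a * a) at 1 by (field; lra); nra).
  destruct (coverage q hq (a, b) ltac:(simpl; lra) ltac:(simpl; lra) n)
    as [c [d [Hcd [g [G1 [G2 Eg]]]]]].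
  assert (Hinv := Adj_pair_inv q hq n c d Hcd).
  destruct (deep_pair_not_initial n a b c d ha hb Ha Hb Hinv) as [Nc1 [Nc2 [Nd1 Nd2]]];
    [exists g; auto|].
  destruct (Adj_in _ _ _ Hcd) as [Inc Ind].
  assert (Lfr := unimodular_frame q hq u0 u1 L0 L1 W).
  exists (comb u0 u1 c), (comb u0 u1 d). repeat split.
  - apply (grandchild_intro _ _ _ n); [rewrite SBlist_comb; apply in_map; trivial|].
    apply comb_not_initial; trivial.
  - apply (grandchild_intro _ _ _ n); [rewrite SBlist_comb; apply in_map; trivial|].
    apply comb_not_initial; trivial.
  - rewrite wedge_comb, W. destruct Hinv as [Wcd _]. rewrite Wcd. ring.
  - intros [[h _]|[h _]]; [apply Nc1|apply Nc2]; apply (comb_inj u0 u1 _ _ W);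
      rewrite h; [symmetry; apply comb_e1|symmetry; apply comb_e2].
  - apply open_cone_of_nonparallel.
    + exists g. split; [|split]; trivial. rewrite comb_comb, <- Eg. exact Ev.
    + apply NP, Lam_frame_comb, (SBstd_in_Lambda q hq n); trivial.
    + apply NP, Lam_frame_comb, (SBstd_in_Lambda q hq n); trivial.
Qed.

Definition norm1 (v : vec) : R := Rabs (fst v) + Rabs (snd v).

Lemma wedge_le_vnorm w u : Rabs (wedge w u) <= vnorm w * norm1 u.
Proof.
  destruct w as [x y], u as [z t]. unfold wedge, norm1, vnorm. cbn [fst snd].
  assert (Hx : Rabs x <= sqrt (x ^ 2 + y ^ 2))
    by (rewrite <- sqrt_Rsqr_abs; apply sqrt_le_1_alt; unfold Rsqr; nra).
  assert (Hy : Rabs y <= sqrt (x ^ 2 + y ^ 2))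
    by (rewrite <- sqrt_Rsqr_abs; apply sqrt_le_1_alt; unfold Rsqr; nra).
  pose proof (Rabs_pos z). pose proof (Rabs_pos t).
  eapply Rle_trans; [apply Rabs_triang|]. rewrite Rabs_Ropp, !Rabs_mult. nra.
Qed.

(* A vector generated at stage m + 1 has norm at least (m + 2) / (|u0|_1 + |u1|_1):
   its coordinates in the frame (u0, u1) are wedges with u1 and u0. *)
Lemma generated_norm u0 u1 m w : wedge u0 u1 = 1 -> generated_at q u0 u1 (S m) w ->
  INR (S m) + 1 <= vnorm w * (norm1 u0 + norm1 u1).
Proof.
  intros W [_ [I1 I2]]. replace (S m - 1)%nat with m in I2 by lia.
  rewrite SBlist_comb in I1, I2. apply in_map_iff in I1 as [p [<- Hp]].
  assert (Np : ~ In p (SBstd q m)) by (intros F; apply I2, in_map; trivial).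
  pose proof (new_size q hq m p Hp Np) as Hs.
  pose proof (wedge_le_vnorm (comb u0 u1 p) u1) as B1.
  pose proof (wedge_le_vnorm (comb u0 u1 p) u0) as B0.
  rewrite wedge_comb_l, W, Rmult_1_r in B1.
  assert (E0 : wedge (comb u0 u1 p) u0 = - snd p).
  { transitivity (- wedge u0 (comb u0 u1 p)); [unfold wedge; ring|rewrite wedge_comb_r, W; ring]. }
  rewrite E0, Rabs_Ropp in B0. unfold size1 in Hs.
  pose proof (Rle_abs (fst p)). pose proof (Rle_abs (snd p)). lra.
Qed.

Theorem generated_unbounded (u0 u1 : vec) (w : nat -> vec) :
  wedge u0 u1 = 1 -> (forall n, (1 <= n)%nat -> generated_at q u0 u1 n (w n)) ->
  forall M : R, exists N : nat, forall n, (N <= n)%nat -> M < vnorm (w n).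
Proof.
  intros W Hg M.
  set (K := norm1 u0 + norm1 u1).
  assert (HK : 0 <= K) by (unfold K, norm1; pose proof (Rabs_pos (fst u0));
    pose proof (Rabs_pos (snd u0)); pose proof (Rabs_pos (fst u1)); pose proof (Rabs_pos (snd u1)); lra).
  destruct (nat_above (M * K)) as [N HN]. exists (S N). intros [|m] Hm; [lia|].
  pose proof (generated_norm u0 u1 m (w (S m)) W (Hg (S m) ltac:(lia))) as Hw. fold K in Hw.
  assert (INR N <= INR (S m)) by (apply le_INR; lia).
  destruct (Rle_or_lt (vnorm (w (S m))) M) as [h|h]; [|trivial].
  exfalso. assert (vnorm (w (S m)) * K <= M * K) by (apply Rmult_le_compat_r; trivial). lra.
Qed.

(* If (1, r) = g1 a + g2 b with (a, b) unimodular in the right half-plane and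
   g1, g2 >= 0, then a or b has slope within 2 g1 g2 of r: the slope errors are
   g2 / fst a and g1 / fst b, and g1 fst a + g2 fst b = 1. *)
Lemma slope_from_pair a b r g :
  wedge a b = 1 -> 0 <= fst a -> 0 <= fst b -> 0 <= fst g -> 0 <= snd g ->
  (1, r) = comb a b g ->
  exists w, (w = a \/ w = b) /\ fst w <> 0 /\ Rabs (snd w / fst w - r) <= 2 * fst g * snd g.
Proof.
  intros W a1 b1 G1 G2 E.
  destruct a as [ax ay], b as [bx by'], g as [g1 g2].
  unfold wedge, comb, vadd, vscale in *. cbn [fst snd] in *. injection E as E1 E2.
  assert (Ea : ay - r * ax = - g2).
  { transitivity (ay * (1 - (g1 * ax + g2 * bx)) - g2 * (ax * by' - bx * ay));
      [rewrite E2; ring|rewrite <- E1, W; ring]. }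
  assert (Eb : by' - r * bx = g1).
  { transitivity (by' * (1 - (g1 * ax + g2 * bx)) + g1 * (ax * by' - bx * ay));
      [rewrite E2; ring|rewrite <- E1, W; ring]. }
  destruct (Rle_dec (1 / 2) (g1 * ax)) as [C|C].
  - assert (0 < ax) by nra.
    exists (ax, ay). split; [auto|]. cbn [fst snd]. split; [lra|].
    replace (ay / ax - r) with ((ay - r * ax) / ax) by (field; lra). rewrite Ea.
    unfold Rdiv. rewrite Rabs_mult, Rabs_Ropp, Rabs_right, Rabs_right by
      (try (left; apply Rinv_0_lt_compat); lra).
    assert (/ ax <= 2 * g1) by (apply Rmult_le_reg_r with ax; [lra|]; rewrite Rinv_l by lra; lra).
    nra.
  - assert (0 < bx) by nra.
    exists (bx, by'). split; [auto|]. cbn [fst snd]. split; [lra|].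
    replace (by' / bx - r) with ((by' - r * bx) / bx) by (field; lra). rewrite Eb.
    unfold Rdiv. rewrite Rabs_mult, Rabs_right, Rabs_right by
      (try (left; apply Rinv_0_lt_compat); lra).
    assert (/ bx <= 2 * g2) by (apply Rmult_le_reg_r with bx; [lra|]; rewrite Rinv_l by lra; lra).
    nra.
Qed.

Lemma pair_coeff_small n a b r g : pair_inv n a b -> 0 <= fst g -> 0 <= snd g ->
  (1, r) = comb a b g -> fst g * snd g * (INR n + 1) <= (1 + r) ^ 2.
Proof.
  intros [_ [a1 [a2 [b1 [b2 Hs]]]]] G1 G2 E.
  assert (Hr : 1 + r = fst g * size1 a + snd g * size1 b).
  { unfold size1. destruct a, b, g. unfold comb, vadd, vscale in E. simpl in *.
    injection E as -> ->. ring. }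
  assert (P : INR n + 1 <= size1 a * size1 b) by (unfold size1 in *; nra).
  assert (Ga : 0 <= fst g * size1 a) by (unfold size1; nra).
  assert (Gb : 0 <= snd g * size1 b) by (unfold size1; nra).
  apply Rle_trans with ((fst g * size1 a) * (snd g * size1 b)).
  - replace (fst g * size1 a * (snd g * size1 b)) with (fst g * snd g * (size1 a * size1 b)) by ring.
    apply Rmult_le_compat_l; [nra|trivial].
  - rewrite Hr. nra.
Qed.

(* Part (4) for positive slopes: approximate r by vectors of a deep consecutive
   pair whose cone contains (1, r). *)
Lemma slope_density_pos r eps : 0 < r -> 0 < eps ->
  exists x y : R, InLambda q (x, y) /\ x <> 0 /\ Rabs (y / x - r) < eps.
Proof.
  intros hr he.
  destruct (nat_above (2 * (1 + r) ^ 2 / eps)) as [n Hn].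
  destruct (coverage q hq (1, r) ltac:(simpl; lra) ltac:(simpl; lra) n)
    as [a [b [Hab [g [G1 [G2 Eg]]]]]].
  assert (Hinv := Adj_pair_inv q hq n a b Hab).
  pose proof (pair_coeff_small n a b r g Hinv G1 G2 Eg) as Hg.
  destruct Hinv as [W [a1 [_ [b1 _]]]].
  destruct (slope_from_pair a b r g W ltac:(lra) b1 G1 G2 Eg) as [[x y] [Hw [Hx Herr]]].
  exists x, y. split; [|split; [exact Hx|]].
  - destruct (Adj_in _ _ _ Hab) as [Ia Ib].
    destruct Hw as [<-|<-]; eapply SBstd_in_Lambda; eauto.
  - apply Rle_lt_trans with (1 := Herr).
    assert (2 * (1 + r) ^ 2 < eps * INR n)
      by (apply Rmult_lt_compat_l with (r := eps) in Hn; [|lra]; field_simplify in Hn; lra).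
    pose proof (pos_INR n). nra.
Qed.

(* Part (4); negative slopes follow by the reflection (x, y) -> (x, -y). *)
Theorem slope_density r eps : 0 < eps ->
  exists x y : R, InLambda q (x, y) /\ x <> 0 /\ Rabs (y / x - r) < eps.
Proof.
  intros he. destruct (Rtotal_order r 0) as [h|[->|h]].
  - destruct (slope_density_pos (- r) eps ltac:(lra) he) as [x [y [H1 [H2 H3]]]].
    exists x, (- y). split; [apply Lam_reflect; trivial|]. split; [trivial|].
    replace (- y / x - r) with (- (y / x - - r)) by (field; trivial). rewrite Rabs_Ropp. trivial.
  - exists 1, 0. split; [apply Lam_e1|]. split; [lra|].
    replace (0 / 1 - 0) with 0 by field. rewrite Rabs_R0. trivial.
  - apply slope_density_pos; trivial.
Qed.

End Applications.

Theorem mainTheorem3 (q : nat) (hq : (3 <= q)%nat) :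
  (* (1) *)
  (forall v0 v1 : vec, InLambda q v0 -> InLambda q v1 ->
     v0 <> v1 -> v0 <> vneg v1 -> 1 <= Rabs (wedge v0 v1)) /\
  (* (2) *)
  (forall v u0 u1 : vec,
     v <> (0, 0) ->
     (forall u, InLambda q u -> ~ parallel v u) ->
     InLambda q u0 -> InLambda q u1 -> wedge u0 u1 = 1 ->
     in_open_cone u0 u1 v ->
     exists w0 w1 : vec,
       grandchild q u0 u1 w0 /\ grandchild q u0 u1 w1 /\
       wedge w0 w1 = 1 /\
       ~ ((w0 = u0 /\ w1 = u1) \/ (w0 = u1 /\ w1 = u0)) /\
       in_open_cone w0 w1 v) /\
  (* (3) *)
  (forall (u0 u1 : vec) (w : nat -> vec),
     InLambda q u0 -> InLambda q u1 -> wedge u0 u1 = 1 ->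
     (forall n, (1 <= n)%nat -> generated_at q u0 u1 n (w n)) ->
     forall M : R, exists N : nat, forall n, (N <= n)%nat -> M < vnorm (w n)) /\
  (* (4) *)
  (forall (r eps : R), 0 < eps ->
     exists x y : R, InLambda q (x, y) /\ x <> 0 /\ Rabs (y / x - r) < eps).
Proof.
  split; [exact (Lambda_wedge_ge1 q hq)|].
  split; [intros v u0 u1 _; exact (cone_refinement q hq v u0 u1)|].
  split; [intros u0 u1 w _ _; exact (generated_unbounded q hq u0 u1 w)|].
  exact (slope_density q hq).
Qed.
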